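(* Let $V$ be a vector space over a field $F$ and let $n\ge 2$. If a widget with $n$ pairs in $V$ contains a legal subwidget, then the widget itself is legal.
   Context: A widget with $n$ pairs in $V$ is an indexed family of $n$ pairs of vectors $p_j=(p_j^+,p_j^-)$, $j=1,\dots,n$, in $V$. A section of a widget is a set of points containing at most one point from each pair. A widget with $n$ pairs is legal if every section spans a linear subspace of $V$ of dimension at most $n-1$. A subwidget of a widget with $n$ pairs is the widget formed by some $k$ of its pairs with $1\le k<n$; it is itself a widget with $k$ pairs, so it is legal if every one of its sections spans a subspace of dimension at most $k-1$. *)

From HB Require Import structures.
From mathcomp Require Import all_boot all_order all_algebra.
Set Implicit Arguments. Unset Strict Implicit. Unset Printing Implicit Defensive.
Import GRing.Theory.
Local Open Scope ring_scope.

(* A widget with n pairs in V: w : 'I_n -> V * V, with p_j^+ = (w j).1,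
   p_j^- = (w j).2. *)

Definition pt (V : Type) (p : V * V) (b : bool) : V := if b then p.1 else p.2.

(* "The set of points P spans a subspace of dimension at most k":
   span P is contained in the span of some k vectors b_0..b_(k-1),
   i.e. every point of P is a linear combination of them. *)
Definition span_dim_le (F : fieldType) (V : lmodType F) (P : V -> Prop) (k : nat) : Prop :=
  exists b : 'I_k -> V, forall v, P v ->
    exists c : 'I_k -> F, v = \sum_(i < k) c i *: b i.

(* The section of the (sub)widget indexed by S determined by the selection
   s : for each pair j in S, s j = None (no point taken), Some true (p_j^+),
   or Some false (p_j^-). *)
Definition section_pts (F : fieldType) (V : lmodType F) (n : nat)
  (w : 'I_n -> V * V) (S : {set 'I_n}) (s : 'I_n -> option bool) : V -> Prop :=
  fun v => exists j, j \in S /\ exists b, s j = Some b /\ v = pt (w j) b.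

Definition legal_on (F : fieldType) (V : lmodType F) (n : nat)
  (w : 'I_n -> V * V) (S : {set 'I_n}) : Prop :=
  forall s : 'I_n -> option bool, span_dim_le (section_pts w S s) (#|S|.-1).

Definition legal (F : fieldType) (V : lmodType F) (n : nat) (w : 'I_n -> V * V) : Prop :=
  legal_on w [set: 'I_n].

From mathcomp Require Import all_boot all_order all_algebra.
From mathcomp Require Import zify.
Set Implicit Arguments. Unset Strict Implicit. Unset Printing Implicit Defensive.
Import GRing.Theory.
Local Open Scope ring_scope.

(* A section of the whole widget splits into a section of the legal subwidget
   on S, spanning at most |S| - 1 dimensions, and a section of the complement,
   whose at most n - |S| points span at most n - |S| dimensions; together they
   span at most n - 1 dimensions. *)

Section SpanDim.

Variables (F : fieldType) (V : lmodType F).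

Lemma span_dim_le_sub (P Q : V -> Prop) k :
  (forall v, P v -> Q v) -> span_dim_le Q k -> span_dim_le P k.
Proof. by move=> PQ [b Qb]; exists b => v /PQ /Qb. Qed.

Lemma span_dim_le_or (P Q : V -> Prop) k l :
  span_dim_le P k -> span_dim_le Q l ->
  span_dim_le (fun v => P v \/ Q v) (k + l).
Proof.
move=> [b Pb] [b' Qb'].
exists (fun i => match split i with inl i => b i | inr i => b' i end).
move=> v [/Pb [c ->] | /Qb' [c ->]].
- exists (fun i => match split i with inl i => c i | inr _ => 0 end).
  rewrite big_split_ord /= [X in _ + X]big1 ?addr0 => [|i _].
    by apply: eq_bigr => i _; rewrite (unsplitK (inl i)).
  by rewrite (unsplitK (inr i)) scale0r.
- exists (fun i => match split i with inl _ => 0 | inr i => c i end).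
  rewrite big_split_ord /= [X in X + _]big1 ?add0r => [|i _].
    by apply: eq_bigr => i _; rewrite (unsplitK (inr i)).
  by rewrite (unsplitK (inl i)) scale0r.
Qed.

End SpanDim.

Section Sections.

Variables (F : fieldType) (V : lmodType F) (n : nat) (w : 'I_n -> V * V).

Lemma section_ptsU (S T : {set 'I_n}) s v :
  section_pts w (S :|: T) s v -> section_pts w S s v \/ section_pts w T s v.
Proof.
move=> [j [/setUP [jS | jT] pj]]; [left | right]; by exists j.
Qed.

Lemma section_pts_span_dim_le_card (T : {set 'I_n}) s :
  span_dim_le (section_pts w T s) #|T|.
Proof.
exists (fun i => let j := enum_val i in
          if s j is Some b then pt (w j) b else 0).
move=> v [j [jT [b [sj ->]]]].
exists (fun i => if enum_val i == j then 1 else 0).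
rewrite (bigD1 (enum_rank_in jT j)) //= enum_rankK_in // eqxx sj scale1r.
rewrite big1 ?addr0 // => i ij; case: eqP => [ej | _]; last by rewrite scale0r.
by move: ij; rewrite -{2}ej enum_valK_in eqxx.
Qed.

Lemma legal_on_setU (S T : {set 'I_n}) :
  (0 < #|S|)%N -> [disjoint S & T] -> legal_on w S -> legal_on w (S :|: T).
Proof.
move=> S_gt0 dST legalS s.
have -> : (#|S :|: T|.-1 = #|S|.-1 + #|T|)%N.
  by rewrite cardsU (disjoint_setI0 dST) cards0 subn0; lia.
apply: span_dim_le_sub (@section_ptsU S T s) _.
exact: span_dim_le_or (legalS s) (section_pts_span_dim_le_card T s).
Qed.

End Sections.

Theorem mainTheorem6 (F : fieldType) (V : lmodType F) (n : nat)
  (w : 'I_n -> V * V) :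
  (2 <= n)%N ->
  (exists S : {set 'I_n}, (0 < #|S| < n)%N /\ legal_on w S) ->
  legal w.
Proof.
move=> _ [S [/andP [S_gt0 _] legalS]].
rewrite /legal -(setUCr S).
apply: legal_on_setU S_gt0 _ legalS.
by rewrite -subsets_disjoint.
Qed.
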